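(* Let $n \ge r \ge 1$, let $\bm U^\star \in \mathbb{R}^{n\times r}$ have rows $\bm u_1^\star,\dots,\bm u_n^\star \in \mathbb{R}^r$ (written as column vectors), and let $\bm M = \bm M^\star := \bm U^\star \bm U^{\star T}$ (noiseless case). Let $\Omega = \{(i,j)\in[n]\times[n] : m_{ij} \ge 0\}$ (ReLU sampling), and let $$F(\bm U) = \tfrac14 \left\| (\bm U\bm U^T - \bm M)_\Omega\right\|_F^2, \qquad \bm U \in \mathbb{R}^{n\times r}.$$ Let $\mathcal{C}_1,\dots,\mathcal{C}_{2^r}$ be the $2^r$ orthants of $\mathbb{R}^r$, ordered so that for each $i\in[2^r-1]$ the sign patterns of $\mathcal{C}_i$ and $\mathcal{C}_{i+1}$ differ in exactly one coordinate. Suppose $[n]$ is partitioned into index sets $J_1,\dots,J_{2^r}$ such that $\bm u_k^\star \in \mathcal{C}_i$ for every $k\in J_i$, and let $\bm U_i^\star \in \mathbb{R}^{|J_i|\times r}$ be the submatrix of $\bm U^\star$ formed by the rows indexed by $J_i$. Assume: (1) $\mathrm{rank}(\bm U_i^\star) = r$ for every $i\in[2^r]$; (2) for every $i \in [2^r-1]$, letting $\Omega_{i+1,i} = \{(k,l)\in J_{i+1}\times J_i : \bm u_k^{\star T}\bm u_l^\star \ge 0\}$, we have $|\Omega_{i+1,i}| \ge r^2$ and the linear span of $\{\bm u_k^\star \bm u_l^{\star T} : (k,l)\in \Omega_{i+1,i}\}$ equals $\mathbb{R}^{r\times r}$. Then $\bm U\in\mathbb{R}^{n\times r}$ is a global minimizer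 of $F$ over $\mathbb{R}^{n\times r}$ if and only if $\bm U\bm U^T = \bm M^\star$.
   Context: For a matrix $\bm A\in\mathbb{R}^{n\times n}$ and $\Omega\subseteq[n]\times[n]$, $(\bm A)_\Omega$ denotes the matrix that agrees with $\bm A$ on entries in $\Omega$ and is zero elsewhere. $[n]=\{1,\dots,n\}$. $m_{ij}$ denotes the $(i,j)$ entry of $\bm M$. *)

From HB Require Import structures.
From mathcomp Require Import all_boot all_order all_algebra.
From mathcomp Require Import all_classical all_reals.
Set Implicit Arguments. Unset Strict Implicit. Unset Printing Implicit Defensive.
Import Order.TTheory GRing.Theory Num.Theory.
Local Open Scope ring_scope.

Definition maskmx (R : realType) (n : nat) (Om : pred ('I_n * 'I_n))
  (A : 'M[R]_n) : 'M[R]_n :=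
  \matrix_(i, j) (if Om (i, j) then A i j else 0).

Definition frob2 (R : realType) (m p : nat) (A : 'M[R]_(m, p)) : R :=
  \sum_(i < m) \sum_(j < p) A i j ^+ 2.

Definition relu_set (R : realType) (n : nat) (M : 'M[R]_n) : pred ('I_n * 'I_n) :=
  fun p => 0 <= M p.1 p.2.

Definition Fobj (R : realType) (n r : nat) (M : 'M[R]_n) (U : 'M[R]_(n, r)) : R :=
  4^-1 * frob2 (maskmx (relu_set M) (U *m U^T - M)).

Definition in_orthant (R : realType) (r : nat) (s : {ffun 'I_r -> bool})
  (x : 'rV[R]_r) : Prop :=
  forall j : 'I_r, if s j then 0 <= x 0 j else x 0 j <= 0.

(* submatrix of U formed by the rows indexed by A (in increasing order) *)
Definition subrows (R : realType) (n r : nat) (A : {set 'I_n}) (U : 'M[R]_(n, r))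
  : 'M[R]_(#|A|, r) :=
  \matrix_(a, j) U (enum_val a) j.

From HB Require Import structures.
From mathcomp Require Import all_boot all_order all_algebra.
From mathcomp Require Import all_classical all_reals.
Set Implicit Arguments. Unset Strict Implicit. Unset Printing Implicit Defensive.
Import Order.TTheory GRing.Theory Num.Theory.
Local Open Scope ring_scope.

(* A global minimiser of F is a zero of F, i.e. a U whose Gram matrix agrees with
   M on Omega.  Rows lying in a common orthant have nonnegative inner products, so
   on each block J_i the Gram matrices agree entirely; as U_i^* has full column
   rank, U_i = U_i^* Q_i with Q_i orthogonal.  On Omega_(i+1,i) the agreement reads
   u_k Q_(i+1) Q_i^T u_l^T = u_k u_l^T, and since the u_k^T u_l span all r x r
   matrices, Q_(i+1) = Q_i.  So U = U^* Q and U U^T = M. *)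

Section Frobenius.
Variables (R : realType) (m p : nat).
Implicit Types A : 'M[R]_(m, p).

Lemma frob2_ge0 A : 0 <= frob2 A.
Proof. by apply: sumr_ge0 => i _; apply: sumr_ge0 => j _; apply: sqr_ge0. Qed.

Lemma frob2_0 : frob2 (0 : 'M[R]_(m, p)) = 0.
Proof. by apply: big1 => i _; apply: big1 => j _; rewrite mxE expr0n. Qed.

Lemma frob2_eq0 A : frob2 A = 0 -> A = 0.
Proof.
have row_ge0 i : 0 <= \sum_(j < p) A i j ^+ 2 by apply: sumr_ge0 => j _; apply: sqr_ge0.
move=> /(psumr_eq0P (fun i _ => row_ge0 i)) A0; apply/matrixP => i j.
have /(psumr_eq0P (fun j _ => sqr_ge0 (A i j))) /(_ j isT) := A0 i isT.
by rewrite mxE => /eqP; rewrite sqrf_eq0 => /eqP.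
Qed.

Lemma mxtrace_mul_trmx A : \tr (A *m A^T) = frob2 A.
Proof.
by apply: eq_bigr => i _; rewrite mxE; apply: eq_bigr => j _; rewrite mxE expr2.
Qed.

Lemma mul_trmx_eq0 A : A *m A^T = 0 -> A = 0.
Proof. by move=> AA0; apply: frob2_eq0; rewrite -mxtrace_mul_trmx AA0 mxtrace0. Qed.

End Frobenius.

Lemma row_mul_trmx_row (R : realType) n r (A B : 'M[R]_(n, r)) k l :
  row k A *m (row l B)^T = ((A *m B^T) k l)%:M.
Proof.
apply/matrixP => i j; rewrite !ord1 !mxE /=.
by apply: eq_bigr => c _; rewrite !mxE.
Qed.

(* With a left inverse [L *m A = 1], the orthogonal factor is [Q := L *m B]. *)
Lemma gram_eq_orthogonal (R : realType) m r (A B : 'M[R]_(m, r)) :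
  \rank A = r -> A *m A^T = B *m B^T ->
  exists2 Q : 'M[R]_r, Q *m Q^T = 1%:M & B = A *m Q.
Proof.
move=> rkA gramAB.
have /row_fullP [L LA1] : row_full A by rewrite /row_full rkA.
set Q := L *m B.
have QQ1 : Q *m Q^T = 1%:M.
  by rewrite trmx_mul mulmxA -(mulmxA L) -gramAB mulmxA LA1 mul1mx -trmx_mul LA1 trmx1.
have BQA : B *m (A *m Q)^T = A *m A^T.
  by rewrite !trmx_mul !mulmxA -gramAB -(mulmxA A A^T) -trmx_mul LA1 trmx1 mulmx1.
have AQB : A *m Q *m B^T = A *m A^T.
  by rewrite -(trmxK (A *m Q *m B^T)) trmx_mul trmxK BQA trmx_mul trmxK.
have AQQA : A *m Q *m (A *m Q)^T = A *m A^T.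
  by rewrite trmx_mul mulmxA -(mulmxA A) QQ1 mulmx1.
exists Q => //; apply/eqP; rewrite -subr_eq0; apply/eqP/mul_trmx_eq0.
by rewrite linearB /= mulmxBl !mulmxBr BQA AQB AQQA -gramAB !subrr.
Qed.

Definition outer_spanning (R : realType) n r (Us : 'M[R]_(n, r))
    (Om : {set 'I_n * 'I_n}) :=
  forall A : 'M[R]_r, exists c : 'I_n * 'I_n -> R,
    A = \sum_(p in Om) c p *: ((row p.1 Us)^T *m row p.2 Us).

(* Expanding one factor of [\tr (P^T *m P)] along the spanning family leaves the
   terms [\tr (u_l^T *m u_k *m P) = u_k *m P *m u_l^T = 0]. *)
Lemma outer_spanning_eq0 (R : realType) n r (Us : 'M[R]_(n, r)) Om (P : 'M[R]_r) :
  outer_spanning Us Om ->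
  (forall p, p \in Om -> row p.1 Us *m P *m (row p.2 Us)^T = 0) -> P = 0.
Proof.
move=> span P0; apply: frob2_eq0.
have [c Pc] := span P; rewrite -mxtrace_mul_trmx mxtrace_mulC {2}Pc.
rewrite mulmx_sumr raddf_sum /=; apply: big1 => q Omq.
rewrite -scalemxAr linearZ /= -mxtrace_tr !trmx_mul !trmxK.
by rewrite -mulmxA mxtrace_mulC P0 // mxtrace0 mulr0.
Qed.

Lemma orthogonal_eq_of_outer_spanning (R : realType) n r (Us : 'M[R]_(n, r)) Om
    (Q0 Q1 : 'M[R]_r) :
  Q0 *m Q0^T = 1%:M -> outer_spanning Us Om ->
  (forall p, p \in Om ->
     row p.1 Us *m Q1 *m (row p.2 Us *m Q0)^T = row p.1 Us *m (row p.2 Us)^T) ->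
  Q1 = Q0.
Proof.
move=> Q0Q0 span agree.
have Q1Q0 : Q1 *m Q0^T = 1%:M.
  apply/eqP; rewrite -subr_eq0; apply/eqP; apply: outer_spanning_eq0 span _ => q Omq.
  by rewrite mulmxBr mulmx1 mulmxBl mulmxA -mulmxA -trmx_mul agree // subrr.
by rewrite -[Q1]mulmx1 -(mulmx1C Q0Q0) mulmxA Q1Q0 mul1mx.
Qed.

Lemma in_orthant_mul_ge0 (R : realType) r (s : {ffun 'I_r -> bool})
    (x y : 'rV[R]_r) :
  in_orthant s x -> in_orthant s y -> 0 <= (x *m y^T) 0 0.
Proof.
move=> sx sy; rewrite mxE; apply: sumr_ge0 => j _; rewrite mxE.
by have := sx j; have := sy j; case: (s j) => hy hx; [apply: mulr_ge0 | apply: mulr_le0].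
Qed.

Section Subrows.
Variables (R : realType) (n r : nat) (S : {set 'I_n}).

Lemma subrows_gram (V : 'M[R]_(n, r)) a b :
  (subrows S V *m (subrows S V)^T) a b = (V *m V^T) (enum_val a) (enum_val b).
Proof. by rewrite !mxE; apply: eq_bigr => j _; rewrite !mxE. Qed.

Lemma row_subrows (V : 'M[R]_(n, r)) k (Sk : k \in S) :
  row k V = row (enum_rank_in Sk k) (subrows S V).
Proof. by apply/rowP => j; rewrite !mxE enum_rankK_in. Qed.

Lemma subrows_gram_orthogonal (Us U : 'M[R]_(n, r)) :
  \rank (subrows S Us) = r ->
  {in S &, forall k l, (U *m U^T) k l = (Us *m Us^T) k l} ->
  exists2 Q : 'M[R]_r, Q *m Q^T = 1%:M & {in S, forall k, row k U = row k Us *m Q}.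
Proof.
move=> rkUs agree.
have [|Q QQ1 UsQ] := gram_eq_orthogonal rkUs (B := subrows S U).
  by apply/matrixP => a b; rewrite !subrows_gram agree // enum_valP.
by exists Q => // k Sk; rewrite !(row_subrows _ Sk) UsQ row_mul.
Qed.

End Subrows.

Section ReluRigidity.
Variables (R : realType) (n r N : nat) (Us U : 'M[R]_(n, r)) (J : 'I_n -> nat).
Let M := Us *m Us^T.

Hypothesis N_gt0 : (0 < N)%N.
Hypothesis J_lt : forall k, (J k < N)%N.
Hypothesis block_rank : forall i, (i < N)%N -> \rank (subrows [set k | J k == i] Us) = r.
Hypothesis block_ge0 : forall k l, J k = J l -> 0 <= M k l.
Hypothesis link_spanning : forall i, (i.+1 < N)%N ->
  outer_spanning Us [set p | [&& J p.1 == i.+1, J p.2 == i & 0 <= M p.1 p.2]].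
Hypothesis relu_agree : forall k l, 0 <= M k l -> (U *m U^T) k l = M k l.

Lemma block_orthogonal i : (i < N)%N ->
  exists2 Q : 'M[R]_r, Q *m Q^T = 1%:M & forall k, J k = i -> row k U = row k Us *m Q.
Proof.
move=> ltiN; have [|Q QQ1 UsQ] := subrows_gram_orthogonal (block_rank ltiN) (U := U).
  by move=> k l; rewrite !inE => /eqP Jk /eqP Jl; apply/relu_agree/block_ge0; rewrite Jk Jl.
by exists Q => // k Jk; apply: UsQ; rewrite inE Jk.
Qed.

Lemma relu_agree_orthogonal :
  exists2 Q : 'M[R]_r, Q *m Q^T = 1%:M & U = Us *m Q.
Proof.
have [Q QQ1 UsQ0] := block_orthogonal N_gt0.
suff UsQ i : (i < N)%N -> forall k, J k = i -> row k U = row k Us *m Q.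
  by exists Q => //; apply/row_matrixP => k; rewrite row_mul (UsQ _ (J_lt k)).
elim: i => [//|i IHi] ltiN.
have [Q' _ UsQ'] := block_orthogonal ltiN.
suff -> : Q = Q' by [].
apply/esym/(orthogonal_eq_of_outer_spanning QQ1 (link_spanning ltiN)) => q.
rewrite inE => /and3P [/eqP Jq1 /eqP Jq2 Mq].
by rewrite -UsQ' // -IHi ?(ltnW ltiN) // !row_mul_trmx_row relu_agree.
Qed.

Lemma relu_agree_gram : U *m U^T = M.
Proof.
have [Q QQ1 ->] := relu_agree_orthogonal.
by rewrite trmx_mul mulmxA -(mulmxA Us) QQ1 mulmx1.
Qed.

End ReluRigidity.

Lemma Fobj_ge0 (R : realType) n r (M : 'M[R]_n) (U : 'M[R]_(n, r)) : 0 <= Fobj M U.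
Proof. by rewrite mulr_ge0 ?invr_ge0 ?frob2_ge0. Qed.

Lemma Fobj_eq0P (R : realType) n r (M : 'M[R]_n) (U : 'M[R]_(n, r)) :
  Fobj M U = 0 <-> (forall k l, 0 <= M k l -> (U *m U^T) k l = M k l).
Proof.
split=> [|agree].
  move=> /eqP; rewrite mulf_eq0 invr_eq0 pnatr_eq0 /= => /eqP /frob2_eq0 mask0 k l Mkl.
  have /matrixP/(_ k l)/eqP := mask0.
  by rewrite !mxE /relu_set /= Mkl subr_eq0 => /eqP.
rewrite /Fobj; suff -> : maskmx (relu_set M) (U *m U^T - M) = 0 by rewrite frob2_0 mulr0.
apply/matrixP => k l; rewrite !mxE.
by case: ifP => // Mkl; rewrite -(agree k l Mkl) mxE subrr.
Qed.

Lemma Fobj_gram_minP (R : realType) n r (Us U : 'M[R]_(n, r)) :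
  (forall V : 'M[R]_(n, r), Fobj (Us *m Us^T) U <= Fobj (Us *m Us^T) V) <->
  Fobj (Us *m Us^T) U = 0.
Proof.
have FUs0 : Fobj (Us *m Us^T) Us = 0 by apply/Fobj_eq0P.
split=> [minU | -> V]; last exact: Fobj_ge0.
by apply/eqP; rewrite eq_le Fobj_ge0 -FUs0 minU.
Qed.

Theorem theorem3p3 (R : realType) (n r : nat) (Ustar : 'M[R]_(n, r))
  (* orthants C_0, ..., C_(2^r - 1), given by their sign patterns *)
  (sigma : nat -> {ffun 'I_r -> bool})
  (* J k = index i of the part J_i containing row k *)
  (J : 'I_n -> nat) :
  (1 <= r)%N -> (r <= n)%N ->
  (* sigma enumerates the 2^r orthants without repetition *)
  (forall i j, (i < 2 ^ r)%N -> (j < 2 ^ r)%N -> sigma i = sigma j -> i = j) ->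
  (* consecutive orthants differ in exactly one coordinate *)
  (forall i, (i.+1 < 2 ^ r)%N ->
     #|[set j : 'I_r | sigma i j != sigma i.+1 j]| = 1%N) ->
  (* J_0, ..., J_(2^r-1) partition [n], with u_k in C_i for k in J_i *)
  (forall k, (J k < 2 ^ r)%N) ->
  (forall k, in_orthant (sigma (J k)) (row k Ustar)) ->
  (* (1) rank U_i^star = r *)
  (forall i, (i < 2 ^ r)%N ->
     \rank (subrows [set k | J k == i] Ustar) = r) ->
  (* (2) conditions on Omega_{i+1,i} *)
  (forall i, (i.+1 < 2 ^ r)%N ->
     let Om := [set p : 'I_n * 'I_n |
                 [&& J p.1 == i.+1, J p.2 == i & 0 <= (Ustar *m Ustar^T) p.1 p.2]] in
     (r ^ 2 <= #|Om|)%N /\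
     (forall A : 'M[R]_r, exists c : 'I_n * 'I_n -> R,
        A = \sum_(p in Om) c p *: ((row p.1 Ustar)^T *m row p.2 Ustar))) ->
  forall U : 'M[R]_(n, r),
    (forall V : 'M[R]_(n, r), Fobj (Ustar *m Ustar^T) U <= Fobj (Ustar *m Ustar^T) V)
    <-> U *m U^T = Ustar *m Ustar^T.
Proof.
move=> _ _ _ _ J_lt orthant block_rank link U.
rewrite Fobj_gram_minP Fobj_eq0P; split=> [agree | -> //].
have block_ge0 k l : J k = J l -> 0 <= (Ustar *m Ustar^T) k l.
  move=> Jkl; have := orthant l; rewrite -Jkl => /(in_orthant_mul_ge0 (orthant k)).
  by rewrite row_mul_trmx_row mxE mulr1n.
exact: relu_agree_gram (expn_gt0 2 r) J_lt block_rank block_ge0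
  (fun i lti => proj2 (link i lti)) agree.
Qed.
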